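(* Let $n\geq 2$ be an integer and $k\in\{1,\ldots,n-1\}$. Let $a_1,\ldots,a_n$ and $b_1,\ldots,b_{n-k}$ be positive real numbers such that $\max_{1\leq i\leq n}a_i\leq \min_{1\leq j\leq n-k}b_j$ and $\sum_{i=1}^{n}a_i=\sum_{j=1}^{n-k}b_j$. Then $$\sum_{i=1}^{n}a_i^2<\sum_{j=1}^{n-k}b_j^2.$$ *)

From mathcomp Require Import all_boot all_order all_algebra.

From mathcomp Require Import all_boot all_order all_algebra.
Import Order.TTheory GRing.Theory Num.Theory.
Local Open Scope ring_scope.

(* Let c be the largest a_i.  Then sum a_i^2 <= c sum a_i = c sum b_j <= sum b_j^2,
   and equality throughout would force every a_i and every b_j to equal c, so the
   two equal sums would be (#a) c and (#b) c with #b < #a and c > 0. *)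

Section SumSquares.

Variable R : realFieldType.

Lemma leif_pM2r (x y z : R) : 0 < z -> x <= y -> x * z <= y * z ?= iff (x == y).
Proof.
move=> z_gt0 le_xy; split; first by rewrite ler_pM2r.
by rewrite (inj_eq (mulIf _)) // gt_eqF.
Qed.

Lemma sum_sqr_leif_mul_sum [I : finType] [a : I -> R] [c : R] :
  (forall i, 0 < a i) -> (forall i, a i <= c) ->
  \sum_i a i ^+ 2 <= c * \sum_i a i ?= iff [forall i, a i == c].
Proof.
move=> a_gt0 a_le_c; rewrite mulr_sumr; apply: leif_sum => i _.
by rewrite expr2; apply: leif_pM2r.
Qed.

Lemma mul_sum_leif_sum_sqr [J : finType] [b : J -> R] [c : R] :
  0 < c -> (forall j, c <= b j) ->
  c * \sum_j b j <= \sum_j b j ^+ 2 ?= iff [forall j, c == b j].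
Proof.
move=> c_gt0 c_le_b; rewrite mulr_sumr; apply: leif_sum => j _.
by rewrite expr2; apply: leif_pM2r => //; apply: lt_le_trans (c_le_b j).
Qed.

Lemma sum_sqr_lt_fewer_larger (I J : finType) (a : I -> R) (b : J -> R) :
  (#|J| < #|I|)%N -> (forall i, 0 < a i) -> (forall i j, a i <= b j) ->
  \sum_i a i = \sum_j b j -> \sum_i a i ^+ 2 < \sum_j b j ^+ 2.
Proof.
move=> ltJI a_gt0 a_le_b eq_sum.
have /card_gt0P[i0 _] : (0 < #|I|)%N := leq_ltn_trans (leq0n _) ltJI.
have [i1 _ max_a] := arg_maxP a (erefl : xpredT i0); set c := a i1 in max_a.
have a_le_c i : a i <= c by apply: max_a.
have := sum_sqr_leif_mul_sum a_gt0 a_le_c; rewrite eq_sum => /leif_trans.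
move/(_ _ _ (mul_sum_leif_sum_sqr (a_gt0 i1) (a_le_b i1)))/lt_leif ->.
apply/negP => /andP[/forallP a_eq_c /forallP c_eq_b].
have sum_a : \sum_i a i = c *+ #|I|.
  by rewrite -sumr_const; apply: eq_bigr => i _; apply/eqP.
have sum_b : \sum_j b j = c *+ #|J|.
  by rewrite -sumr_const; apply: eq_bigr => j _; apply/esym/eqP.
have /(mulrIn (lt0r_neq0 (a_gt0 i1))) eq_card : c *+ #|I| = c *+ #|J|.
  by rewrite -sum_a -sum_b.
by rewrite eq_card ltnn in ltJI.
Qed.

End SumSquares.

Theorem lemma2p1 (R : realFieldType) (n k : nat) (hn : (2 <= n)%N)
  (hk1 : (1 <= k)%N) (hk2 : (k <= n - 1)%N)
  (a : 'I_n -> R) (b : 'I_(n - k) -> R)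
  (ha : forall i, 0 < a i) (hb : forall j, 0 < b j)
  (hmaxmin : forall i j, a i <= b j)
  (hsum : \sum_(i < n) a i = \sum_(j < n - k) b j) :
  \sum_(i < n) a i ^+ 2 < \sum_(j < n - k) b j ^+ 2.
Proof.
apply: sum_sqr_lt_fewer_larger => //.
by rewrite !card_ord ltn_subrL hk1 (leq_trans _ hn).
Qed.
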